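(* Let $F$ be an infinite field. The pairwise distinct commutators $[z_1,a_1y_1,\dots,a_ny_n,z_2,b_1y_1,\dots,b_ny_n]$, where $z_1,z_2$ are distinct variables of degree $1$, $y_1,\dots,y_n$ are distinct variables of degree $0$, $n\ge0$ and $a_i,b_i\ge0$, are linearly independent modulo the $T_{\mathbb{Z}_3}$-ideal $I$ of $\mathbb{Z}_3$-graded identities of $UT_3(F)^{(-)}$.
   Context: $UT_3(F)^{(-)}$: $3\times3$ upper triangular matrices with bracket $[a,b]=ab-ba$ and canonical $\mathbb{Z}_3$-grading (degree-$k$ component spanned by $e_{ij}$ with $j-i=k$). The free Lie algebra is generated by variables of degree $0$ ($y_i$), $1$ ($z_i$), $2$ ($w_i$). Commutators are left normed; $[z_1,a_1y_1,\dots,a_ny_n,z_2,b_1y_1,\dots,b_ny_n]$ denotes $z_1$ followed by $y_i$ repeated $a_i$ times ($i=1,\dots,n$), then $z_2$, then $y_i$ repeated $b_i$ times. *)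

From HB Require Import structures.
From mathcomp Require Import all_boot all_order all_algebra.
Set Implicit Arguments. Unset Strict Implicit. Unset Printing Implicit Defensive.
Import GRing.Theory.
Local Open Scope ring_scope.

Definition infinite_type (T : eqType) : Prop :=
  forall s : seq T, exists x : T, x \notin s.

(* UT_3(F)^(-): the Lie bracket [a,b] = ab - ba on 3x3 matrices
   (restricted below to homogeneous, hence upper triangular, matrices). *)
Definition lie (F : fieldType) (A B : 'M[F]_3) : 'M[F]_3 :=
  A *m B - B *m A.

(* Canonical Z_3-grading of UT_3(F): the degree-k component is spanned by
   the e_ij (indices 0..2) with j - i = k; A is homogeneous of degree k iff
   all its nonzero entries sit at positions (i,j) with i <= j and j - i = k. *)
Definition homog (F : fieldType) (k : nat) (A : 'M[F]_3) : Prop :=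
  forall i j : 'I_3, A i j != 0 -> ((i <= j)%N && (j - i == k)%N).

(* u followed by y_1 repeated a_1 times, ..., y_n repeated a_n times
   (left-normed). *)
Definition br_ys (F : fieldType) (n : nat) (y : 'I_n -> 'M[F]_3)
    (a : n.-tuple nat) (u : 'M[F]_3) : 'M[F]_3 :=
  foldl (fun acc i => iter (tnth a i) (fun v => lie v (y i)) acc) u (enum 'I_n).

(* Evaluation of [z1, a1 y1, ..., an yn, z2, b1 y1, ..., bn yn]
   at y_i := y i, z1, z2. *)
Definition comm_eval (F : fieldType) (n : nat) (y : 'I_n -> 'M[F]_3)
    (z1 z2 : 'M[F]_3) (ab : n.-tuple nat * n.-tuple nat) : 'M[F]_3 :=
  br_ys y ab.2 (lie (br_ys y ab.1 z1) z2).

From mathcomp Require Import all_boot all_order all_algebra.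
Import GRing.Theory.
Local Open Scope ring_scope.

(* Substitute y_i := diag(0, t^(N^i), t^(N^(n+i))), z_1 := e_01, z_2 := e_12.
   Then [z_1, a y, z_2, b y] evaluates to t^E e_02, where E is the integer
   with base-N digits a_1 .. a_n b_1 .. b_n.  For N larger than every digit
   occurring, distinct commutators get distinct exponents E, so a vanishing
   linear combination yields a polynomial in t vanishing on the infinite
   field F; it is therefore zero and all its coefficients vanish. *)

Fixpoint radix (N : nat) (l : seq nat) : nat :=
  if l is d :: l' then (d + N * radix N l')%N else 0%N.

Lemma radix_cat N l1 l2 : radix N (l1 ++ l2) = (radix N l1 + N ^ size l1 * radix N l2)%N.
Proof.
elim: l1 => [|d l IH] /=; first by rewrite expn0 mul1n.
by rewrite IH expnS mulnDr mulnA addnA.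
Qed.

Lemma radixE N l : radix N l = (\sum_(0 <= i < size l) nth 0 l i * N ^ i)%N.
Proof.
elim: l => [|d l IH] /=; first by rewrite big_nil.
rewrite big_nat_recl // expn0 muln1 IH big_distrr /=; congr (_ + _)%N.
by apply: eq_bigr => i _; rewrite expnS mulnCA.
Qed.

Lemma radix_tuple N n (a : n.-tuple nat) : radix N a = (\sum_(i < n) tnth a i * N ^ i)%N.
Proof.
by rewrite radixE size_tuple big_mkord; apply: eq_bigr => i _; rewrite (tnth_nth 0).
Qed.

Lemma radix_inj N l1 l2 : size l1 = size l2 ->
  all (fun d => d < N)%N l1 -> all (fun d => d < N)%N l2 ->
  radix N l1 = radix N l2 -> l1 = l2.
Proof.
elim: l1 l2 => [|d1 l1 IH] [|d2 l2] //= [Hs] /andP[d1N l1N] /andP[d2N l2N] Heq.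
have N0 : (0 < N)%N by apply: leq_ltn_trans d1N.
have Hd : d1 = d2.
  have := congr1 (modn^~ N) Heq.
  by rewrite !(addnC _ (N * _)%N) !(mulnC N) !modnMDl !modn_small.
move: Heq; rewrite Hd => /addnI /eqP; rewrite eqn_pmul2l // => /eqP Heq.
by rewrite (IH l2).
Qed.

Lemma infinite_uniq_seq (T : eqType) : infinite_type T ->
  forall m, exists2 r : seq T, uniq r & size r = m.
Proof.
move=> HT; elim=> [|m [r ur <-]]; first by exists [::].
by have [x xr] := HT r; exists (x :: r); rewrite /= ?xr.
Qed.

Lemma poly_eq0_infinite (F : fieldType) (P : {poly F}) :
  infinite_type F -> (forall t, P.[t] = 0) -> P = 0.
Proof.
move=> HF P0; apply/eqP/negPn/negP => nzP.
have [r ur sr] := infinite_uniq_seq _ HF (size P).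
have rootsP : all (root P) r by apply/allP => t _; rewrite /root P0.
by have := max_poly_roots nzP rootsP ur; rewrite sr ltnn.
Qed.

Lemma sum_scaleXn_eq0 (R : nzRingType) (I : eqType) (s : seq I) (e : I -> nat)
    (c : I -> R) :
  uniq s -> {in s &, injective e} -> \sum_(p <- s) c p *: 'X^(e p) = 0 ->
  {in s, forall p, c p = 0}.
Proof.
move=> us e_inj P0 p ps; have := congr1 (fun P : {poly R} => P`_(e p)) P0.
rewrite coef0 coef_sum (bigD1_seq p) //= coefZ coefXn eqxx mulr1 big1_seq ?addr0 //.
move=> q /andP[qp qs]; rewrite coefZ coefXn.
have -> : (e p == e q) = false by apply: contraNF qp => /eqP/e_inj-> //.
by rewrite mulr0.
Qed.

Section UpperTriangular3.
Variable F : fieldType.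
Implicit Types (A B E : 'M[F]_3) (k d : F).

Lemma lieZl k A B : lie (k *: A) B = k *: lie A B.
Proof. by rewrite /lie scalerBr scalemxAl scalemxAr. Qed.

Lemma lie_delta_diag (i j : 'I_3) (d : 'rV[F]_3) :
  lie (delta_mx i j) (diag_mx d) = (d 0 j - d 0 i) *: delta_mx i j.
Proof.
apply/matrixP=> r c; rewrite /lie mul_mx_diag mul_diag_mx !mxE.
case: (r =P i) => [->|_]; case: (c =P j) => [->|_] /=;
  by rewrite ?mulr0 ?mul0r ?subrr ?mulr1 ?mul1r.
Qed.

Lemma lie_delta_delta (i j k : 'I_3) : i != k ->
  lie (delta_mx i j) (delta_mx j k) = delta_mx i k :> 'M[F]_3.
Proof. by move=> ik; rewrite /lie mul_delta_mx mul_delta_mx_0 ?subr0 // eq_sym. Qed.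

Lemma iter_lie_eigen {B E d} k m : lie E B = d *: E ->
  iter m (fun v => lie v B) (k *: E) = (k * d ^+ m) *: E.
Proof.
move=> EB; elim: m => [|m IH] /=; first by rewrite mulr1.
by rewrite IH lieZl EB scalerA exprSr mulrA.
Qed.

Lemma br_ys_eigen n (y : 'I_n -> 'M[F]_3) E (d : 'I_n -> F) (a : n.-tuple nat) k :
  (forall i, lie E (y i) = d i *: E) ->
  br_ys y a (k *: E) = (k * \prod_(i < n) d i ^+ tnth a i) *: E.
Proof.
move=> Ey; rewrite /br_ys -big_enum; elim: (enum _) k => [|i L IH] k /=.
  by rewrite big_nil mulr1.
by rewrite (iter_lie_eigen _ _ (Ey i)) IH big_cons mulrA.
Qed.

Lemma homog_diag_mx (d : 'rV[F]_3) : homog 0 (diag_mx d).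
Proof.
by move=> i j; rewrite mxE; case: (i =P j) => [->|_]; rewrite ?leqnn ?subnn ?eqxx.
Qed.

Lemma homog_delta_mx (i j : 'I_3) : (i <= j)%N -> homog (j - i) (delta_mx i j : 'M[F]_3).
Proof.
move=> ij r c; rewrite mxE.
by case: (r =P i) => [->|]; case: (c =P j) => [->|]; rewrite ?ij ?eqxx.
Qed.

Lemma comm_eval_diag n (u v : 'I_n -> F) (ab : n.-tuple nat * n.-tuple nat) :
  let y i := diag_mx (\row_j [:: 0; u i; v i]`_j) in
  comm_eval y (delta_mx 0 1) (delta_mx 1 2) ab
  = (\prod_(i < n) u i ^+ tnth ab.1 i * \prod_(i < n) v i ^+ tnth ab.2 i) *: delta_mx 0 2.
Proof.
rewrite /= /comm_eval -[delta_mx 0 1]scale1r (@br_ys_eigen _ _ _ u); last first.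
  by move=> i; rewrite lie_delta_diag !mxE subr0.
rewrite lieZl lie_delta_delta // (@br_ys_eigen _ _ _ v) ?mul1r //.
by move=> i; rewrite lie_delta_diag !mxE subr0.
Qed.

End UpperTriangular3.

Lemma prod_expr_radix (R : comNzRingType) (t : R) N m n (a : n.-tuple nat) :
  \prod_(i < n) (t ^+ (N ^ (m + i))) ^+ tnth a i = t ^+ (N ^ m * radix N a).
Proof.
under eq_bigr do rewrite -exprM; rewrite prodrXr radix_tuple big_distrr /=.
by congr (_ ^+ _); apply: eq_bigr => i _; rewrite expnD mulnCA mulnC.
Qed.

Lemma pair_cat_tuple_inj (T : eqType) n (p q : n.-tuple T * n.-tuple T) :
  p.1 ++ p.2 = q.1 ++ q.2 -> p = q.
Proof.
case: p q => [a b] [a' b'] /= /eqP; rewrite eqseq_cat ?size_tuple //.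
by case/andP=> /eqP/val_inj-> /eqP/val_inj->.
Qed.

Theorem mainTheorem9 (F : fieldType) (HF : infinite_type F) (n : nat)
    (s : seq (n.-tuple nat * n.-tuple nat))
    (c : n.-tuple nat * n.-tuple nat -> F) :
  uniq s ->
  (forall (y : 'I_n -> 'M[F]_3) (z1 z2 : 'M[F]_3),
      (forall i, homog 0 (y i)) -> homog 1 z1 -> homog 1 z2 ->
      \sum_(p <- s) c p *: comm_eval y z1 z2 p = 0) ->
  forall p, p \in s -> c p = 0.
Proof.
move=> us H; pose digits (p : n.-tuple nat * n.-tuple nat) := tval p.1 ++ tval p.2.
pose N := (\max_(p <- s) \max_(d <- digits p) d).+1.
pose E p := radix N (digits p).
have digitsN p : p \in s -> all (fun d => d < N)%N (digits p).
  move=> ps; apply/allP => d dp; rewrite ltnS.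
  exact: leq_trans (leq_bigmax_seq _ dp isT) (leq_bigmax_seq _ ps isT).
have E_inj : {in s &, injective E}.
  move=> p q ps qs /radix_inj Epq; apply: pair_cat_tuple_inj; apply: Epq.
  - by rewrite !size_cat !size_tuple.
  - exact: digitsN.
  - exact: digitsN.
have E_roots t : \sum_(p <- s) c p * t ^+ E p = 0.
  pose u (i : 'I_n) := t ^+ (N ^ (0 + i)); pose v (i : 'I_n) := t ^+ (N ^ (n + i)).
  have := H (fun i => diag_mx (\row_j [:: 0; u i; v i]`_j)) _ _
    (fun i => homog_diag_mx _ _) (homog_delta_mx F 0 1 isT) (homog_delta_mx F 1 2 isT).
  move=> /(congr1 (fun M : 'M[F]_3 => M 0 2)); rewrite summxE mxE => entry02.
  rewrite -[RHS]entry02; apply: eq_bigr => p _.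
  rewrite mxE comm_eval_diag !prod_expr_radix !mxE mulr1.
  by rewrite -exprD expn0 mul1n /E radix_cat size_tuple.
apply: sum_scaleXn_eq0 us E_inj _; apply: poly_eq0_infinite HF _ => t.
by rewrite horner_sum -[RHS](E_roots t); apply: eq_bigr => p _; rewrite hornerZ hornerXn.
Qed.
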